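(* For all configurations $C$ of the CK machine: if $C \to C'$, then $[\![C]\!] \xrightarrow{\tau} [\![C']\!]$; and if $[\![C]\!] \xrightarrow{\tau} P$, then there exists a configuration $C'$ such that $P = [\![C']\!]$.
   Context: HOcore processes: $P,Q ::= a(x).P \mid \overline{a}\langle P\rangle \mid P \parallel Q \mid x \mid 0$ ($a$ channel names, $x$ process variables, $a(x).P$ binds $x$, $\parallel$ associative and commutative with unit $0$). $\tau$-transitions: $\overline{a}\langle P\rangle \parallel a(x).Q \parallel R \xrightarrow{\tau} Q\{P/x\} \parallel R$ (communication between an output and an input on the same name in parallel; up to associativity/commutativity of $\parallel$, with inputs/outputs under input prefixes or inside messages unable to act). CK machine: values $v ::= x \mid \lambda x.t$; terms $t,s ::= v \mid t\,s$; stacks $\pi ::= [\mathrm{arg}\ t]::\pi \mid [\mathrm{fun}\ v]::\pi \mid []$; configurations $C ::= \langle t, \pi\rangle_{\mathrm{ev}} \mid \langle \pi, v\rangle_{\mathrm{cont}}$. Transitions: $\langle t\,s, \pi\rangle_{\mathrm{ev}} \to \langle t, [\mathrm{arg}\ s]::\pi\rangle_{\mathrm{ev}}$; $\langle v,\pi\rangle_{\mathrm{ev}}\to\langle\pi,v\rangle_{\mathrm{cont}}$; $\langle [\mathrm{arg}\ t]::\pi, v\rangle_{\mathrm{cont}} \to \langle t, [\mathrm{fun}\ v]::\pi\rangle_{\mathrm{ev}}$; $\langle [\mathrm{fun}\ \lambda x.t]::\pi, v\rangle_{\mathrm{cont}}\to\langle t\{v/x\},\pi\rangle_{\mathrm{ev}}$.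 Translation (channel names $c$, $val$, $b$; $p$ fresh): $[\![\langle t,\pi\rangle_{\mathrm{ev}}]\!] = [\![t]\!] \parallel \overline{c}\langle[\![\pi]\!]\rangle$; $[\![\langle\pi, v\rangle_{\mathrm{cont}}]\!] = [\![\pi]\!] \parallel \overline{val}\langle [\![v]\!]_v\rangle$; $[\![[]]\!] = \overline{b}\langle 0\rangle$; $[\![[\mathrm{arg}\ t]::\pi]\!] = \mathrm{Arg}([\![t]\!],[\![\pi]\!])$; $[\![[\mathrm{fun}\ v]::\pi]\!] = \mathrm{Fun}([\![v]\!]_v,[\![\pi]\!])$; $\mathrm{Arg}(P_t,P_\pi) = val(x).(P_t \parallel \overline{c}\langle \mathrm{Fun}(x, P_\pi)\rangle)$; $\mathrm{Fun}(P_v,P_\pi) = P_v \parallel \overline{c}\langle P_\pi\rangle$; $[\![x]\!]_v = x$; $[\![\lambda x.t]\!]_v = val(x).[\![t]\!]$; $[\![v]\!] = c(p).(p \parallel \overline{val}\langle[\![v]\!]_v\rangle)$; $[\![t\,s]\!] = c(p).([\![t]\!] \parallel \overline{c}\langle\mathrm{Arg}([\![s]\!], p)\rangle)$. *)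

(* De Bruijn representation of both HOcore processes and
   lambda-terms (alpha-equivalence and freshness handled by indices). *)
From Stdlib Require Import Arith List.
Import ListNotations.

Definition chan := nat.

Inductive proc : Type :=
| PIn  (a : chan) (P : proc)      (* a(x).P, x = index 0 in P *)
| POut (a : chan) (P : proc)
| PPar (P Q : proc)
| PVar (n : nat)
| PNil.

Fixpoint plift (k : nat) (P : proc) : proc :=
  match P with
  | PIn a Q => PIn a (plift (S k) Q)
  | POut a Q => POut a (plift k Q)
  | PPar Q R => PPar (plift k Q) (plift k R)
  | PVar n => if Nat.ltb n k then PVar n else PVar (S n)
  | PNil => PNil
  end.

Definition plift_by (k : nat) (P : proc) : proc := Nat.iter k (plift 0) P.

(* capture-avoiding substitution of N for variable k in P (variables above k
   are decremented, since the binder of k disappears) *)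
Fixpoint psubst (k : nat) (N : proc) (P : proc) : proc :=
  match P with
  | PIn a Q => PIn a (psubst (S k) N Q)
  | POut a Q => POut a (psubst k N Q)
  | PPar Q R => PPar (psubst k N Q) (psubst k N R)
  | PVar n => if Nat.ltb n k then PVar n
              else if Nat.eqb n k then plift_by k N
              else PVar (pred n)
  | PNil => PNil
  end.

(* Q{P/x} where Q is the body of a(x).Q *)
Definition psubst0 (Q P : proc) : proc := psubst 0 P Q.

Inductive scong : proc -> proc -> Prop :=
| sc_refl P : scong P P
| sc_sym P Q : scong P Q -> scong Q P
| sc_trans P Q R : scong P Q -> scong Q R -> scong P R
| sc_assoc P Q R : scong (PPar P (PPar Q R)) (PPar (PPar P Q) R)
| sc_comm P Q : scong (PPar P Q) (PPar Q P)
| sc_nil P : scong (PPar P PNil) P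
| sc_in a P Q : scong P Q -> scong (PIn a P) (PIn a Q)
| sc_out a P Q : scong P Q -> scong (POut a P) (POut a Q)
| sc_par P P' Q Q' : scong P P' -> scong Q Q' -> scong (PPar P Q) (PPar P' Q').

Definition tau (P P' : proc) : Prop :=
  exists (a : chan) (P1 Q R : proc),
    scong P (PPar (POut a P1) (PPar (PIn a Q) R)) /\
    scong P' (PPar (psubst0 Q P1) R).

Inductive value : Type :=
| VVar (n : nat)
| VLam (t : term)                 (* lambda x. t, x = index 0 in t *)
with term : Type :=
| TVal (v : value)
| TApp (t s : term).

Fixpoint vlift (k : nat) (v : value) : value :=
  match v with
  | VVar n => if Nat.ltb n k then VVar n else VVar (S n)
  | VLam t => VLam (tlift (S k) t)
  end
with tlift (k : nat) (t : term) : term :=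
  match t with
  | TVal v => TVal (vlift k v)
  | TApp t1 t2 => TApp (tlift k t1) (tlift k t2)
  end.

Definition vlift_by (k : nat) (v : value) : value := Nat.iter k (vlift 0) v.

Fixpoint vsubst (k : nat) (w : value) (v : value) : value :=
  match v with
  | VVar n => if Nat.ltb n k then VVar n
              else if Nat.eqb n k then vlift_by k w
              else VVar (pred n)
  | VLam t => VLam (tsubst (S k) w t)
  end
with tsubst (k : nat) (w : value) (t : term) : term :=
  match t with
  | TVal v => TVal (vsubst k w v)
  | TApp t1 t2 => TApp (tsubst k w t1) (tsubst k w t2)
  end.

(* t{v/x} where t is the body of lambda x. t *)
Definition tsubst0 (t : term) (v : value) : term := tsubst 0 v t.

Inductive frame : Type :=
| FArg (t : term)
| FFun (v : value).

Definition stack := list frame.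

Inductive config : Type :=
| Ev (t : term) (pi : stack)
| Cont (pi : stack) (v : value).

Inductive ck_step : config -> config -> Prop :=
| ck_app t s pi : ck_step (Ev (TApp t s) pi) (Ev t (FArg s :: pi))
| ck_val v pi : ck_step (Ev (TVal v) pi) (Cont pi v)
| ck_arg t pi v : ck_step (Cont (FArg t :: pi) v) (Ev t (FFun v :: pi))
| ck_beta t pi v : ck_step (Cont (FFun (VLam t) :: pi) v) (Ev (tsubst0 t v) pi).

Definition ch_c : chan := 0.
Definition ch_val : chan := 1.
Definition ch_b : chan := 2.

Definition Fun (Pv Ppi : proc) : proc := PPar Pv (POut ch_c Ppi).

(* Arg(P_t, P_pi) = val(x).(P_t || c<Fun(x, P_pi)>), x fresh *)
Definition Arg (Pt Ppi : proc) : proc :=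
  PIn ch_val (PPar (plift 0 Pt) (POut ch_c (Fun (PVar 0) (plift 0 Ppi)))).

Fixpoint tr_val (v : value) : proc :=
  match v with
  | VVar n => PVar n
  | VLam t => PIn ch_val (tr_term t)
  end
with tr_term (t : term) : proc :=
  match t with
  (* [[v]] = c(p).(p || val<[[v]]_v>), p fresh *)
  | TVal v => PIn ch_c (PPar (PVar 0) (POut ch_val (plift 0 (tr_val v))))
  (* [[t s]] = c(p).([[t]] || c<Arg([[s]], p)>), p fresh *)
  | TApp t1 t2 =>
      PIn ch_c (PPar (plift 0 (tr_term t1))
                     (POut ch_c (Arg (plift 0 (tr_term t2)) (PVar 0))))
  end.

Fixpoint tr_stack (pi : stack) : proc :=
  match pi with
  | [] => POut ch_b PNil
  | FArg t :: pi' => Arg (tr_term t) (tr_stack pi')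
  | FFun v :: pi' => Fun (tr_val v) (tr_stack pi')
  end.

Definition tr_config (C : config) : proc :=
  match C with
  | Ev t pi => PPar (tr_term t) (POut ch_c (tr_stack pi))
  | Cont pi v => PPar (tr_stack pi) (POut ch_val (tr_val v))
  end.

(* Structural congruence only reassociates, permutes and prunes the parallel
   components of a process and rewrites under prefixes, so it preserves the
   multiset of top-level components up to congruence of their continuations.
   A tau-step therefore consumes one top-level output and one top-level input
   on the same channel, and leaves the remaining components untouched.  The
   translation of a CK configuration has at most three top-level components
   and at most one such output/input pair; its communication is the encoding
   of the unique machine step, the beta-case relying on the fact that the
   translation commutes with substitution. *)
From Stdlib Require Import Arith List Permutation Lia.
Import ListNotations.

Lemma plift_plift P i j :
  i <= j -> plift (S j) (plift i P) = plift i (plift j P).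
Proof.
  revert i j; induction P as [a P IH|a P IH|P IHP Q IHQ|n|]; intros i j Hij;
    simpl; try now rewrite ?IH, ?IHP, ?IHQ by lia.
  destruct (Nat.ltb_spec n i), (Nat.ltb_spec n j); simpl;
    repeat match goal with |- context [Nat.ltb ?a ?b] => destruct (Nat.ltb_spec a b) end;
    reflexivity || lia.
Qed.

(* All free variables of [plift_by k N] are at least [k]. *)
Lemma plift_plift_by k N j :
  j <= k -> plift j (plift_by k N) = plift 0 (plift_by k N).
Proof.
  revert j; induction k as [|k IH]; intros j Hjk.
  - now replace j with 0 by lia.
  - destruct j as [|j]; [reflexivity|].
    unfold plift_by; simpl; fold (plift_by k N).
    rewrite plift_plift, IH by lia; reflexivity.
Qed.

Lemma psubst_plift P N k j :
  j <= k -> psubst (S k) N (plift j P) = plift j (psubst k N P).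
Proof.
  revert k j; induction P as [a P IH|a P IH|P IHP Q IHQ|n|]; intros k j Hjk;
    simpl; try now rewrite ?IH, ?IHP, ?IHQ by lia.
  destruct (Nat.ltb_spec n j); simpl.
  - destruct (Nat.ltb_spec n (S k)), (Nat.ltb_spec n k); try lia; simpl.
    destruct (Nat.ltb_spec n j); try lia; reflexivity.
  - destruct (Nat.ltb_spec (S n) (S k)), (Nat.ltb_spec n k); try lia; simpl.
    + destruct (Nat.ltb_spec n j); try lia; reflexivity.
    + destruct (Nat.eqb_spec (S n) (S k)), (Nat.eqb_spec n k); try lia.
      * unfold plift_by at 1; simpl; fold (plift_by k N).
        symmetry; apply plift_plift_by; lia.
      * destruct n as [|n]; [lia|]; simpl.
        destruct (Nat.ltb_spec n j); try lia; reflexivity.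
Qed.

Lemma psubst_plift_cancel P N k : psubst k N (plift k P) = P.
Proof.
  revert k; induction P as [a P IH|a P IH|P IHP Q IHQ|n|]; intros k;
    simpl; try now rewrite ?IH, ?IHP, ?IHQ.
  destruct (Nat.ltb_spec n k); simpl.
  - destruct (Nat.ltb_spec n k); [reflexivity|lia].
  - destruct (Nat.ltb_spec (S n) k); [lia|].
    destruct k as [|k]; simpl; [reflexivity|].
    destruct (Nat.eqb_spec n k); [lia|reflexivity].
Qed.

Scheme value_term_ind := Induction for value Sort Prop
  with term_value_ind := Induction for term Sort Prop.
Combined Scheme value_term_mutind from value_term_ind, term_value_ind.

Lemma tr_lift :
  (forall v k, tr_val (vlift k v) = plift k (tr_val v)) /\
  (forall t k, tr_term (tlift k t) = plift k (tr_term t)).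
Proof.
  apply value_term_mutind; intros; simpl.
  - now destruct (Nat.ltb n k).
  - now rewrite H.
  - now rewrite H, plift_plift by lia.
  - unfold Arg, Fun; simpl. now rewrite H, H0, !plift_plift by lia.
Qed.

Lemma tr_val_lift_by k w : tr_val (vlift_by k w) = plift_by k (tr_val w).
Proof.
  induction k as [|k IH]; [reflexivity|].
  unfold vlift_by, plift_by in *; simpl.
  now rewrite (proj1 tr_lift), IH.
Qed.

Lemma tr_subst :
  (forall v k w, tr_val (vsubst k w v) = psubst k (tr_val w) (tr_val v)) /\
  (forall t k w, tr_term (tsubst k w t) = psubst k (tr_val w) (tr_term t)).
Proof.
  apply value_term_mutind; intros; simpl.
  - destruct (Nat.ltb n k); [reflexivity|].
    destruct (Nat.eqb n k); [apply tr_val_lift_by|reflexivity].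
  - now rewrite H.
  - now rewrite H, psubst_plift by lia.
  - unfold Arg, Fun; simpl. now rewrite H, H0, !psubst_plift by lia.
Qed.

Lemma tr_term_subst0 t v : psubst0 (tr_term t) (tr_val v) = tr_term (tsubst0 t v).
Proof. unfold psubst0, tsubst0; now rewrite (proj2 tr_subst). Qed.

Lemma plift_scong P Q k : scong P Q -> scong (plift k P) (plift k Q).
Proof.
  intros H; revert k; induction H; intros k; simpl; eauto using scong.
Qed.

Lemma plift_by_scong k P Q : scong P Q -> scong (plift_by k P) (plift_by k Q).
Proof.
  intros H; induction k as [|k IH]; [exact H|].
  unfold plift_by in *; simpl; now apply plift_scong.
Qed.

Lemma psubst_scong_l P Q k N : scong P Q -> scong (psubst k N P) (psubst k N Q).
Proof.
  intros H; revert k; induction H; intros k; simpl; eauto using scong.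
Qed.

Lemma psubst_scong_r P k N N' : scong N N' -> scong (psubst k N P) (psubst k N' P).
Proof.
  intros H; revert k; induction P; intros k; simpl; eauto using scong.
  destruct (Nat.ltb n k); [apply sc_refl|].
  destruct (Nat.eqb n k); [now apply plift_by_scong|apply sc_refl].
Qed.

Fixpoint components (P : proc) : list proc :=
  match P with
  | PPar P Q => components P ++ components Q
  | PNil => []
  | _ => [P]
  end.

Fixpoint par_list (l : list proc) : proc :=
  match l with
  | [] => PNil
  | P :: l => PPar P (par_list l)
  end.

Lemma par_list_app l1 l2 :
  scong (par_list (l1 ++ l2)) (PPar (par_list l1) (par_list l2)).
Proof.
  induction l1 as [|P l1 IH]; simpl.
  - eapply sc_trans; [apply sc_sym, sc_nil|apply sc_comm].
  - eapply sc_trans; [apply sc_par; [apply sc_refl|apply IH]|apply sc_assoc].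
Qed.

Lemma par_list_components P : scong P (par_list (components P)).
Proof.
  induction P; simpl; try apply sc_refl; try apply sc_sym, sc_nil.
  eapply sc_trans; [apply sc_par; eassumption|apply sc_sym, par_list_app].
Qed.

Lemma Permutation_par_list l l' : Permutation l l' -> scong (par_list l) (par_list l').
Proof.
  induction 1; simpl.
  - apply sc_refl.
  - now apply sc_par; [apply sc_refl|].
  - eapply sc_trans; [apply sc_assoc|].
    eapply sc_trans; [apply sc_par; [apply sc_comm|apply sc_refl]|].
    apply sc_sym, sc_assoc.
  - eauto using sc_trans.
Qed.

Inductive comp_cong : proc -> proc -> Prop :=
| cc_refl P : comp_cong P P
| cc_in a X Y : scong X Y -> comp_cong (PIn a X) (PIn a Y)
| cc_out a X Y : scong X Y -> comp_cong (POut a X) (POut a Y).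

Lemma comp_cong_sym P Q : comp_cong P Q -> comp_cong Q P.
Proof. destruct 1; constructor; now apply sc_sym. Qed.

Lemma comp_cong_trans P Q R : comp_cong P Q -> comp_cong Q R -> comp_cong P R.
Proof.
  intros H1 H2; destruct H1; inversion H2; subst; constructor; eauto using sc_trans.
Qed.

Lemma comp_cong_scong P Q : comp_cong P Q -> scong P Q.
Proof. destruct 1; eauto using scong. Qed.

Lemma comp_cong_out_inv P a X :
  comp_cong P (POut a X) -> exists X', P = POut a X' /\ scong X' X.
Proof. inversion 1; eauto using sc_refl. Qed.

Lemma comp_cong_in_inv P a Y :
  comp_cong P (PIn a Y) -> exists Y', P = PIn a Y' /\ scong Y' Y.
Proof. inversion 1; eauto using sc_refl. Qed.

Lemma Forall2_comp_cong_refl l : Forall2 comp_cong l l.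
Proof. induction l; constructor; auto using cc_refl. Qed.

Lemma Forall2_comp_cong_sym l l' : Forall2 comp_cong l l' -> Forall2 comp_cong l' l.
Proof. induction 1; constructor; auto using comp_cong_sym. Qed.

Lemma Forall2_comp_cong_trans l1 l2 l3 :
  Forall2 comp_cong l1 l2 -> Forall2 comp_cong l2 l3 -> Forall2 comp_cong l1 l3.
Proof.
  intros H; revert l3; induction H; intros l3 H3; inversion H3; subst;
    constructor; eauto using comp_cong_trans.
Qed.

Lemma Forall2_comp_cong_par_list l l' :
  Forall2 comp_cong l l' -> scong (par_list l) (par_list l').
Proof. induction 1; simpl; auto using sc_refl, sc_par, comp_cong_scong. Qed.

Definition comp_equiv (P Q : proc) : Prop :=
  exists l, Permutation (components P) l /\ Forall2 comp_cong l (components Q).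

Lemma comp_equiv_refl P : comp_equiv P P.
Proof. exists (components P); auto using Forall2_comp_cong_refl. Qed.

Lemma comp_equiv_sym P Q : comp_equiv P Q -> comp_equiv Q P.
Proof.
  intros [l [Hp Hf]].
  destruct (Permutation_Forall2 (Permutation_sym Hp) Hf) as [l' [Hp' Hf']].
  exists l'; auto using Forall2_comp_cong_sym.
Qed.

Lemma comp_equiv_trans P Q R : comp_equiv P Q -> comp_equiv Q R -> comp_equiv P R.
Proof.
  intros [l1 [Hp1 Hf1]] [l2 [Hp2 Hf2]].
  destruct (Permutation_Forall2 Hp2 (Forall2_comp_cong_sym _ _ Hf1)) as [l1' [Hp' Hf']].
  exists l1'; split; [eauto using Permutation_trans|].
  eauto using Forall2_comp_cong_trans, Forall2_comp_cong_sym.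
Qed.

Lemma comp_equiv_perm P Q :
  Permutation (components P) (components Q) -> comp_equiv P Q.
Proof. exists (components Q); auto using Forall2_comp_cong_refl. Qed.

Lemma scong_comp_equiv P Q : scong P Q -> comp_equiv P Q.
Proof.
  induction 1; simpl.
  - apply comp_equiv_refl.
  - now apply comp_equiv_sym.
  - eauto using comp_equiv_trans.
  - apply comp_equiv_perm; simpl; now rewrite app_assoc.
  - apply comp_equiv_perm, Permutation_app_comm.
  - apply comp_equiv_perm; simpl; now rewrite app_nil_r.
  - exists [PIn a P]; split; [apply Permutation_refl|constructor; [now apply cc_in|constructor]].
  - exists [POut a P]; split; [apply Permutation_refl|constructor; [now apply cc_out|constructor]].
  - destruct IHscong1 as [l1 [Hp1 Hf1]], IHscong2 as [l2 [Hp2 Hf2]].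
    exists (l1 ++ l2); split; simpl.
    + now apply Permutation_app.
    + now apply Forall2_app.
Qed.

(* [X] and [Y] are the continuations actually present in [P]; they are only
   congruent to the ones exhibited in the definition of [tau]. *)
Lemma tau_inv P P' :
  tau P P' ->
  exists a X Y l,
    Permutation (components P) (POut a X :: PIn a Y :: l) /\
    scong P' (PPar (psubst0 Y X) (par_list l)).
Proof.
  intros (a & X & Y & R & HP & HP').
  destruct (scong_comp_equiv _ _ HP) as [l [Hp Hf]]; simpl in Hf.
  inversion Hf as [|x ? l0 ? Hx Hf1]; subst.
  inversion Hf1 as [|y ? l1 ? Hy HR]; subst.
  apply comp_cong_out_inv in Hx as [X' [-> HX]].
  apply comp_cong_in_inv in Hy as [Y' [-> HY]].
  exists a, X', Y', l1; split; [exact Hp|].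
  eapply sc_trans; [exact HP'|].
  apply sc_par.
  - unfold psubst0; eapply sc_trans.
    + apply psubst_scong_l, sc_sym, HY.
    + apply psubst_scong_r, sc_sym, HX.
  - eapply sc_trans; [apply par_list_components|].
    apply sc_sym, Forall2_comp_cong_par_list, HR.
Qed.

Lemma tau_pair a X Y P' :
  psubst0 Y X = P' -> tau (PPar (PIn a Y) (POut a X)) P'.
Proof.
  intros <-; exists a, X, Y, PNil; split.
  - eapply sc_trans; [apply sc_comm|].
    apply sc_par; [apply sc_refl|apply sc_sym, sc_nil].
  - apply sc_sym, sc_nil.
Qed.

Lemma subst0_value_body V X :
  psubst0 (PPar (PVar 0) (POut ch_val (plift 0 V))) X = PPar X (POut ch_val V).
Proof. unfold psubst0; simpl; now rewrite psubst_plift_cancel. Qed.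

Lemma subst0_app_body T S X :
  psubst0 (PPar (plift 0 T) (POut ch_c (Arg (plift 0 S) (PVar 0)))) X
  = PPar T (POut ch_c (Arg S X)).
Proof.
  unfold psubst0, Arg, Fun; simpl.
  now rewrite psubst_plift, !psubst_plift_cancel by lia.
Qed.

Lemma subst0_arg_body T S V :
  psubst0 (PPar (plift 0 T) (POut ch_c (Fun (PVar 0) (plift 0 S)))) V
  = PPar T (POut ch_c (Fun V S)).
Proof. unfold psubst0, Fun; simpl; now rewrite !psubst_plift_cancel. Qed.

Lemma tr_config_step C C' : ck_step C C' -> tau (tr_config C) (tr_config C').
Proof.
  destruct 1; simpl.
  - apply tau_pair, subst0_app_body.
  - apply tau_pair, subst0_value_body.
  - apply tau_pair, subst0_arg_body.
  - exists ch_val, (tr_val v), (tr_term t), (POut ch_c (tr_stack pi)); split.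
    + apply sc_comm.
    + rewrite tr_term_subst0; apply sc_refl.
Qed.

Ltac component_inv H :=
  simpl in H;
  repeat (destruct H as [H|H]; [inversion H; subst; clear H|]);
  try contradiction.

Lemma tr_config_redex C a X Y l :
  Permutation (components (tr_config C)) (POut a X :: PIn a Y :: l) ->
  exists C', ck_step C C' /\
             scong (PPar (psubst0 Y X) (par_list l)) (tr_config C').
Proof.
  intros Hp.
  assert (HX : In (POut a X) (components (tr_config C)))
    by (apply (Permutation_in _ (Permutation_sym Hp)); left; reflexivity).
  assert (HY : In (PIn a Y) (components (tr_config C)))
    by (apply (Permutation_in _ (Permutation_sym Hp)); right; left; reflexivity).
  assert (Hrest : forall m,
             Permutation (components (tr_config C)) (POut a X :: PIn a Y :: m) ->
             scong (par_list l) (par_list m)).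
  { intros m Hm; apply Permutation_par_list.
    apply (Permutation_cons_inv (a := PIn a Y)), (Permutation_cons_inv (a := POut a X)).
    eapply Permutation_trans; [apply Permutation_sym, Hp|exact Hm]. }
  assert (Hnil : Permutation (components (tr_config C)) [POut a X; PIn a Y] ->
                 forall Q, scong (PPar Q (par_list l)) Q).
  { intros Hm Q; eapply sc_trans; [apply sc_par; [apply sc_refl|exact (Hrest [] Hm)]|].
    apply sc_nil. }
  destruct C as [[v|t s] pi|[|[t|[n|t]] pi] v];
    component_inv HY; component_inv HX.
  - exists (Cont pi v); split; [constructor|].
    rewrite subst0_value_body; apply Hnil, perm_swap.
  - exists (Ev t (FArg s :: pi)); split; [constructor|].
    rewrite subst0_app_body; apply Hnil, perm_swap.
  - exists (Ev t (FFun v :: pi)); split; [constructor|].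
    rewrite subst0_arg_body; apply Hnil, perm_swap.
  - exists (Ev (tsubst0 t v) pi); split; [constructor|].
    rewrite tr_term_subst0; simpl; apply sc_par; [apply sc_refl|].
    eapply sc_trans; [apply Hrest, Permutation_sym, Permutation_cons_append|apply sc_nil].
Qed.

Theorem theorem6p1 :
  forall C : config,
    (forall C' : config, ck_step C C' -> tau (tr_config C) (tr_config C')) /\
    (forall P : proc, tau (tr_config C) P ->
       exists C' : config, scong P (tr_config C')).
Proof.
  intros C; split.
  - apply tr_config_step.
  - intros P Htau.
    destruct (tau_inv _ _ Htau) as (a & X & Y & l & Hp & HP).
    destruct (tr_config_redex _ _ _ _ _ Hp) as (C' & _ & HC').
    exists C'; eapply sc_trans; eassumption.
Qed.
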